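(* Assume (C1) and (C2). (i) There are positive constants $\rho$ and $\delta'$ such that $I(u)\ge\delta'$ for all $u\in\mathcal{D}$ with $\|u\|=\rho$. (ii) There is $\varphi\in\mathcal{D}\setminus\{0\}$ such that $I(t\varphi)\to-\infty$ as $t\to+\infty$.
   Context: Fix real numbers $p,q,r$ with $1<p<q$, $\frac p2$ a positive integer, and $r\ge1$, and functions $a,b,c:\mathbb{Z}\to(0,+\infty)$. Conditions: - (C1) There is $b_0>0$ with $b(n)\ge b_0$ for all $n$ and $b(n)\to+\infty$ as $|n|\to\infty$. - (C2) There is $c_0>0$ with $c(n)\le c_0$ for all $n$ and $\sum_n c(n)<+\infty$. Notation and spaces: - $\Delta u(n)=u(n+1)-u(n)$. - $E$ is the set of real sequences $u$ with $\|u\|:=\big(\sum_n[a(n)|\Delta u(n)|^p+b(n)|u(n)|^p]\big)^{1/p}<\infty$. - $\mathcal{D}=\{u\in E:\sum_n c(n)|u(n)|^q\ln|u(n)|^r<+\infty\}$, where terms with $u(n)=0$ are read as $0$. For $u\in\mathcal{D}$: $$I(u)=\frac1p\|u\|^p+\frac{r}{q^2}\sum_n c(n)|u(n)|^q-\frac1q\sum_n c(n)|u(n)|^q\ln|u(n)|^r.$$ *)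

From Stdlib Require Import Reals ZArith.
From Coquelicot Require Import Coquelicot.
Open Scope R_scope.

(* x^a for x >= 0 and a > 0, with the convention 0^a = 0
   (Stdlib's Rpower 0 a would give 1). *)
Definition rpow (x a : R) : R :=
  if Rle_dec x 0 then 0 else Rpower x a.

Definition absp (x a : R) : R := rpow (Rabs x) a.

(* Sums over Z, split into n >= 0 and n <= -1. *)
Definition zpos (f : Z -> R) (n : nat) : R := f (Z.of_nat n).
Definition zneg (f : Z -> R) (n : nat) : R := f (- Z.of_nat n - 1)%Z.

Definition zsummable (f : Z -> R) : Prop :=
  ex_series (fun n => Rabs (zpos f n)) /\ ex_series (fun n => Rabs (zneg f n)).

Definition zsum (f : Z -> R) : R := Series (zpos f) + Series (zneg f).

Definition Delta (u : Z -> R) (n : Z) : R := u (n + 1)%Z - u n.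

Definition Eterm (p : R) (a b u : Z -> R) (n : Z) : R :=
  a n * absp (Delta u n) p + b n * absp (u n) p.

Definition inE (p : R) (a b u : Z -> R) : Prop := zsummable (Eterm p a b u).

Definition normE (p : R) (a b u : Z -> R) : R := rpow (zsum (Eterm p a b u)) (1 / p).

(* c(n)|u(n)|^q ln |u(n)|^r, read as 0 when u(n) = 0 *)
Definition logterm (q r : R) (c u : Z -> R) (n : Z) : R :=
  if Req_EM_T (u n) 0 then 0 else c n * absp (u n) q * ln (absp (u n) r).

Definition inD (p q r : R) (a b c u : Z -> R) : Prop :=
  inE p a b u /\ zsummable (logterm q r c u).

Definition Ifun (p q r : R) (a b c u : Z -> R) : R :=
  1 / p * rpow (normE p a b u) p
  + r / (q ^ 2) * zsum (fun n => c n * absp (u n) q)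
  - 1 / q * zsum (logterm q r c u).

(** Part (i): if [||u||^p] is smaller than [inf b], then [b(n)|u(n)|^p <= ||u||^p]
    forces [|u(n)| < 1] for every [n]; there the logarithmic term of [I] is
    nonpositive and the [r/q^2] term nonnegative, so [I(u) >= ||u||^p / p].
    Part (ii): for [phi] the indicator of [{0}] and [A = a(0) + b(0) + a(-1)],
    [I(t phi) = A t^p / p + r c(0) t^q / q^2 - r c(0) t^q ln t / q], in which
    the [t^q ln t] term dominates because [p <= q]. *)
From Pilot Require Import Defs.
From Stdlib Require Import Reals ZArith Lra Lia FunctionalExtensionality.
From Coquelicot Require Import Coquelicot.
Open Scope R_scope.

Lemma Rpower_gt0 x a : 0 < Rpower x a.
Proof. apply exp_pos. Qed.

Lemma rpow_Rpower x a : 0 < x -> rpow x a = Rpower x a.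
Proof. intros; unfold rpow; destruct Rle_dec; [lra | reflexivity]. Qed.

Lemma rpow_nonpos x a : x <= 0 -> rpow x a = 0.
Proof. intros; unfold rpow; destruct Rle_dec; [reflexivity | lra]. Qed.

Lemma rpow_ge0 x a : 0 <= rpow x a.
Proof. unfold rpow; destruct Rle_dec; [lra | left; apply Rpower_gt0]. Qed.

Lemma rpow_root_pow x p : 0 < p -> 0 <= x -> rpow (rpow x (1 / p)) p = x.
Proof.
  intros hp [hx | <-]; [| now rewrite (rpow_nonpos 0), rpow_nonpos by lra].
  rewrite (rpow_Rpower x) by exact hx.
  rewrite rpow_Rpower, Rpower_mult by apply Rpower_gt0.
  replace (1 / p * p) with 1 by (field; lra).
  now apply Rpower_1.
Qed.

Lemma absp_ge0 x a : 0 <= absp x a.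
Proof. apply rpow_ge0. Qed.

Lemma absp0 a : absp 0 a = 0.
Proof. unfold absp; rewrite Rabs_R0; apply rpow_nonpos; lra. Qed.

Lemma absp_Rpower x a : x <> 0 -> absp x a = Rpower (Rabs x) a.
Proof. intros hx; apply rpow_Rpower, Rabs_pos_lt, hx. Qed.

Lemma Rabs_lt1_of_absp_lt1 x p : 0 < p -> absp x p < 1 -> Rabs x < 1.
Proof.
  intros hp hx.
  destruct (Rlt_le_dec (Rabs x) 1) as [| h1]; [easy |].
  rewrite absp_Rpower in hx by (intros ->; rewrite Rabs_R0 in h1; lra).
  pose proof (Rle_Rpower (Rabs x) 0 p h1 (Rlt_le _ _ hp)) as h.
  rewrite Rpower_O in h; lra.
Qed.

Lemma absp_le1 x q : 0 <= q -> Rabs x <= 1 -> absp x q <= 1.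
Proof.
  intros hq hx.
  destruct (Req_dec x 0) as [-> | hx0]; [rewrite absp0; lra |].
  rewrite absp_Rpower by exact hx0.
  apply Rle_trans with (Rpower 1 q).
  - apply Rle_Rpower_l; [exact hq |].
    split; [apply Rabs_pos_lt |]; assumption.
  - unfold Rpower; rewrite ln_1, Rmult_0_r, exp_0; lra.
Qed.

Lemma logterm_le0 q r c u n :
  0 <= r -> 0 <= c n -> Rabs (u n) < 1 -> logterm q r c u n <= 0.
Proof.
  intros hr hc hu; unfold logterm.
  destruct Req_EM_T as [| hu0]; [lra |].
  rewrite (absp_Rpower _ r hu0), ln_Rpower.
  assert (hln : ln (Rabs (u n)) < 0).
  { rewrite <- ln_1; apply ln_increasing; [apply Rabs_pos_lt |]; assumption. }
  apply Rle_trans with (c n * absp (u n) q * 0); [| lra].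
  apply Rmult_le_compat_l; [apply Rmult_le_pos; [exact hc | apply absp_ge0] | nra].
Qed.

Lemma is_series_zero : is_series (fun _ : nat => 0) 0.
Proof.
  eapply filterlim_ext; [| apply filterlim_const].
  intros n; simpl; rewrite sum_n_const; ring.
Qed.

Lemma is_series_supp0 (a : nat -> R) : (forall n, a (S n) = 0) -> is_series a (a 0%nat).
Proof.
  intros ha; apply is_series_decr_1.
  change (is_series (fun k => a (S k)) (a 0%nat - a 0%nat)); rewrite Rminus_diag.
  eapply is_series_ext; [| apply is_series_zero].
  intros n; simpl; now rewrite ha.
Qed.

Lemma Series_ge0 (a : nat -> R) : (forall n, 0 <= a n) -> ex_series a -> 0 <= Series a.
Proof.
  intros ha hs.
  rewrite <- (is_series_unique _ _ is_series_zero).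
  apply Series_le; [intros n; split; [lra | apply ha] | exact hs].
Qed.

Lemma le_Series (a : nat -> R) k : (forall n, 0 <= a n) -> ex_series a -> a k <= Series a.
Proof.
  revert a; induction k as [| k IH]; intros a ha hs;
    rewrite (Series_incr_1 a hs); apply ex_series_incr_1 in hs.
  - pose proof (Series_ge0 _ (fun n => ha (S n)) hs); lra.
  - pose proof (IH _ (fun n => ha (S n)) hs); pose proof (ha 0%nat); lra.
Qed.

Lemma zsummable_ex_series f : zsummable f -> ex_series (zpos f) /\ ex_series (zneg f).
Proof. intros [h1 h2]; split; apply ex_series_Rabs; assumption. Qed.

Lemma zsum_ge0 f : zsummable f -> (forall n, 0 <= f n) -> 0 <= zsum f.
Proof.
  intros hs hf; destruct (zsummable_ex_series f hs) as [h1 h2]; unfold zsum.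
  pose proof (Series_ge0 (zpos f) (fun n => hf _) h1).
  pose proof (Series_ge0 (zneg f) (fun n => hf _) h2).
  lra.
Qed.

Lemma zsum_le0 f : zsummable f -> (forall n, f n <= 0) -> zsum f <= 0.
Proof.
  intros hs hf; destruct (zsummable_ex_series f hs) as [h1 h2]; unfold zsum.
  assert (hp : 0 <= Series (fun n => - zpos f n)).
  { apply Series_ge0; [intros n; specialize (hf (Z.of_nat n)); unfold zpos; lra |].
    apply (ex_series_opp _ h1). }
  assert (hn : 0 <= Series (fun n => - zneg f n)).
  { apply Series_ge0; [intros n; specialize (hf (- Z.of_nat n - 1)%Z); unfold zneg; lra |].
    apply (ex_series_opp _ h2). }
  rewrite Series_opp in hp, hn; lra.
Qed.

Lemma le_zsum f n : zsummable f -> (forall m, 0 <= f m) -> f n <= zsum f.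
Proof.
  intros hs hf; destruct (zsummable_ex_series f hs) as [h1 h2]; unfold zsum.
  pose proof (Series_ge0 (zpos f) (fun n => hf _) h1).
  pose proof (Series_ge0 (zneg f) (fun n => hf _) h2).
  destruct (Z_le_gt_dec 0 n).
  - pose proof (le_Series (zpos f) (Z.to_nat n) (fun n => hf _) h1) as h.
    unfold zpos at 1 in h; rewrite Z2Nat.id in h by lia; lra.
  - pose proof (le_Series (zneg f) (Z.to_nat (- n - 1)) (fun n => hf _) h2) as h.
    unfold zneg at 1 in h; rewrite Z2Nat.id in h by lia.
    replace (- (- n - 1) - 1)%Z with n in h by lia; lra.
Qed.

Lemma zsummable_le f g : (forall n, Rabs (g n) <= Rabs (f n)) -> zsummable f -> zsummable g.
Proof.
  intros hgf [h1 h2].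
  split; [refine (@ex_series_le R_AbsRing R_CompleteNormedModule _ _ _ h1)
         | refine (@ex_series_le R_AbsRing R_CompleteNormedModule _ _ _ h2)];
    intros n; unfold norm; simpl; unfold abs; simpl; rewrite Rabs_Rabsolu; apply hgf.
Qed.

Lemma zsum_supp_0_neg1 f : (forall n, n <> 0%Z -> n <> (-1)%Z -> f n = 0) ->
  zsummable f /\ zsum f = f 0%Z + f (-1)%Z.
Proof.
  intros hf.
  assert (hp : forall k, zpos f (S k) = 0) by (intros k; unfold zpos; apply hf; lia).
  assert (hn : forall k, zneg f (S k) = 0) by (intros k; unfold zneg; apply hf; lia).
  split; [split |].
  - exists (Rabs (zpos f 0%nat)); apply is_series_supp0; intros; rewrite hp; apply Rabs_R0.
  - exists (Rabs (zneg f 0%nat)); apply is_series_supp0; intros; rewrite hn; apply Rabs_R0.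
  - unfold zsum.
    now rewrite (is_series_unique _ _ (is_series_supp0 _ hp)),
      (is_series_unique _ _ (is_series_supp0 _ hn)).
Qed.

Section LowerBoundNearZero.

Variables (p q r : R) (a b c : Z -> R).
Hypotheses (hp : 0 < p) (hq : 0 < q) (hr : 0 <= r).
Hypotheses (ha : forall n, 0 <= a n) (hc : forall n, 0 <= c n) (hcs : zsummable c).

Lemma Eterm_ge0 u n : (forall m, 0 <= b m) -> 0 <= Eterm p a b u n.
Proof.
  intros hb; unfold Eterm.
  pose proof (absp_ge0 (Defs.Delta u n) p); pose proof (absp_ge0 (u n) p).
  pose proof (ha n); pose proof (hb n); nra.
Qed.

Lemma normE_pow u : (forall n, 0 <= b n) -> inE p a b u ->
  rpow (normE p a b u) p = zsum (Eterm p a b u).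
Proof.
  intros hb hu; apply rpow_root_pow; [exact hp |].
  apply zsum_ge0; [exact hu | intros n; now apply Eterm_ge0].
Qed.

Lemma Rabs_lt1_of_normE_pow_lt b0 u : 0 < b0 -> (forall n, b0 <= b n) -> inE p a b u ->
  rpow (normE p a b u) p < b0 -> forall n, Rabs (u n) < 1.
Proof.
  intros hb0 hbb hu hsmall n.
  assert (hb : forall m, 0 <= b m) by (intros m; specialize (hbb m); lra).
  rewrite normE_pow in hsmall by assumption.
  pose proof (le_zsum _ n hu (fun m => Eterm_ge0 u m hb)) as hn; unfold Eterm at 1 in hn.
  pose proof (absp_ge0 (Defs.Delta u n) p); pose proof (absp_ge0 (u n) p).
  assert (b0 * absp (u n) p <= b n * absp (u n) p)
    by (apply Rmult_le_compat_r; [apply absp_ge0 | apply hbb]).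
  assert (0 <= a n * absp (Defs.Delta u n) p) by (apply Rmult_le_pos; [apply ha | apply absp_ge0]).
  apply (Rabs_lt1_of_absp_lt1 _ p hp); nra.
Qed.

Lemma Ifun_ge_on_unit_ball u : inD p q r a b c u -> (forall n, Rabs (u n) < 1) ->
  1 / p * rpow (normE p a b u) p <= Ifun p q r a b c u.
Proof.
  intros [_ hlog] hu.
  assert (hcu : forall n, 0 <= c n * absp (u n) q <= c n).
  { intros n; pose proof (absp_ge0 (u n) q); pose proof (hc n).
    pose proof (absp_le1 (u n) q (Rlt_le _ _ hq) (Rlt_le _ _ (hu n))); split; nra. }
  assert (hpow : 0 <= zsum (fun n => c n * absp (u n) q)).
  { apply zsum_ge0; [| intros n; apply hcu].
    apply (zsummable_le c); [| exact hcs].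
    intros n; rewrite !Rabs_pos_eq; apply hcu || apply hc. }
  assert (hln : zsum (logterm q r c u) <= 0).
  { apply zsum_le0; [exact hlog | intros n; now apply logterm_le0]. }
  assert (0 <= r / q ^ 2) by (apply Rdiv_le_0_compat; [| apply pow_lt]; lra).
  assert (0 < 1 / q) by (apply Rdiv_lt_0_compat; lra).
  unfold Ifun; nra.
Qed.

Lemma Ifun_ge_on_sphere b0 u : 0 < b0 -> (forall n, b0 <= b n) -> inD p q r a b c u ->
  normE p a b u = rpow (b0 / 2) (1 / p) -> b0 / (2 * p) <= Ifun p q r a b c u.
Proof.
  intros hb0 hbb hu hnorm.
  assert (hpow : rpow (normE p a b u) p = b0 / 2)
    by (rewrite hnorm; apply rpow_root_pow; lra).
  replace (b0 / (2 * p)) with (1 / p * rpow (normE p a b u) p) by (rewrite hpow; field; lra).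
  apply Ifun_ge_on_unit_ball; [exact hu |].
  apply (Rabs_lt1_of_normE_pow_lt b0); try easy; [apply hu | lra].
Qed.

End LowerBoundNearZero.

Lemma power_log_to_m_infty alpha beta gamma p q :
  0 <= alpha -> 0 < gamma -> p <= q -> 1 <= q ->
  is_lim (fun t => alpha * Rpower t p + beta * Rpower t q - gamma * Rpower t q * ln t)
    p_infty m_infty.
Proof.
  intros halpha hgamma hpq hq.
  apply (is_lim_le_m_loc (fun t => - t)); [| apply (is_lim_opp _ p_infty p_infty), is_lim_id].
  set (T := (alpha + beta + 1) / gamma).
  exists (Rmax 1 (exp T)); intros t ht.
  pose proof (Rmax_l 1 (exp T)); pose proof (Rmax_r 1 (exp T)).
  assert (hlog : alpha + beta + 1 <= gamma * ln t).
  { assert (hT : T < ln t)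
      by (rewrite <- (ln_exp T); apply ln_increasing; [apply exp_pos | lra]).
    assert (gamma * T = alpha + beta + 1) by (unfold T; field; lra).
    nra. }
  assert (hpow : Rpower t p <= Rpower t q) by (apply Rle_Rpower; lra).
  assert (hid : t <= Rpower t q).
  { rewrite <- (Rpower_1 t) at 1 by lra; apply Rle_Rpower; lra. }
  set (Y := Rpower t q) in *.
  assert (alpha * Rpower t p <= alpha * Y) by (apply Rmult_le_compat_l; lra).
  assert (Y * (alpha + beta + 1) <= Y * (gamma * ln t)) by (apply Rmult_le_compat_l; lra).
  nra.
Qed.

Definition delta0 (n : Z) : R := if Z.eq_dec n 0 then 1 else 0.

Section ScaledIndicator.

Variables (p q r : R) (a b c : Z -> R) (t : R).
Hypothesis ht : 0 < t.

Let tdelta0 (n : Z) : R := t * delta0 n.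

Lemma Eterm_scaled_delta0 : zsummable (Eterm p a b tdelta0) /\
  zsum (Eterm p a b tdelta0) = (a 0%Z + b 0%Z + a (-1)%Z) * Rpower t p.
Proof.
  destruct (zsum_supp_0_neg1 (Eterm p a b tdelta0)) as [hs ->].
  - intros n h0 h1; unfold Eterm, Defs.Delta, tdelta0, delta0.
    repeat destruct Z.eq_dec; try lia.
    rewrite !Rmult_0_r, Rminus_0_r, absp0; ring.
  - split; [exact hs |]; unfold Eterm, Defs.Delta, tdelta0, delta0.
    repeat destruct Z.eq_dec; try lia.
    replace (t * 0 - t * 1) with (- t) by ring; replace (t * 1 - t * 0) with t by ring.
    rewrite Rmult_1_r, Rmult_0_r, absp0, !absp_Rpower, Rabs_Ropp, Rabs_pos_eq by lra.
    ring.
Qed.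

Lemma cterm_scaled_delta0 : zsum (fun n => c n * absp (tdelta0 n) q) = c 0%Z * Rpower t q.
Proof.
  destruct (zsum_supp_0_neg1 (fun n => c n * absp (tdelta0 n) q)) as [_ ->].
  - intros n h0 h1; unfold tdelta0, delta0.
    destruct Z.eq_dec; try lia; rewrite Rmult_0_r, absp0; ring.
  - unfold tdelta0, delta0; repeat destruct Z.eq_dec; try lia.
    rewrite Rmult_1_r, Rmult_0_r, absp0, absp_Rpower, Rabs_pos_eq by lra; ring.
Qed.

Lemma logterm_scaled_delta0 : zsummable (logterm q r c tdelta0) /\
  zsum (logterm q r c tdelta0) = c 0%Z * Rpower t q * (r * ln t).
Proof.
  destruct (zsum_supp_0_neg1 (logterm q r c tdelta0)) as [hs ->].
  - intros n h0 h1; unfold logterm, tdelta0, delta0.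
    destruct Req_EM_T; [reflexivity |]; destruct Z.eq_dec; [lia | lra].
  - split; [exact hs |]; unfold logterm, tdelta0, delta0.
    repeat (destruct Req_EM_T; destruct Z.eq_dec; try lia; try lra).
    rewrite Rmult_1_r, !absp_Rpower, Rabs_pos_eq, ln_Rpower by lra; ring.
Qed.

Lemma inD_scaled_delta0 : inD p q r a b c tdelta0.
Proof. split; [apply Eterm_scaled_delta0 | apply logterm_scaled_delta0]. Qed.

Lemma Ifun_scaled_delta0 : 0 < p -> 0 < q -> (forall n, 0 <= a n) -> (forall n, 0 < b n) ->
  Ifun p q r a b c tdelta0 =
  (a 0%Z + b 0%Z + a (-1)%Z) / p * Rpower t p + r * c 0%Z / q ^ 2 * Rpower t q
  - r * c 0%Z / q * Rpower t q * ln t.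
Proof.
  intros hp hq ha hb.
  unfold Ifun; rewrite cterm_scaled_delta0, (proj2 logterm_scaled_delta0).
  rewrite normE_pow; [| exact hp | exact ha | intros n; apply Rlt_le, hb
                     | apply inD_scaled_delta0].
  rewrite (proj2 Eterm_scaled_delta0).
  field; lra.
Qed.

End ScaledIndicator.

Theorem lemma4p3 (p q r : R) (a b c : Z -> R)
  (hp : 1 < p) (hpq : p < q) (hp2 : exists k : nat, (0 < k)%nat /\ p = 2 * INR k)
  (hr : 1 <= r)
  (ha : forall n, 0 < a n) (hb : forall n, 0 < b n) (hc : forall n, 0 < c n)
  (C1 : (exists b0, 0 < b0 /\ forall n, b0 <= b n) /\
        (forall M, exists N, forall n, (N < Z.abs n)%Z -> M <= b n))
  (C2 : (exists c0, 0 < c0 /\ forall n, c n <= c0) /\ zsummable c) :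
  (exists rho delta', 0 < rho /\ 0 < delta' /\
     forall u, inD p q r a b c u -> normE p a b u = rho -> delta' <= Ifun p q r a b c u)
  /\
  (exists phi : Z -> R, inD p q r a b c phi /\ (exists n, phi n <> 0) /\
     (forall t, 0 < t -> inD p q r a b c (fun n => t * phi n)) /\
     is_lim (fun t => Ifun p q r a b c (fun n => t * phi n)) p_infty m_infty).
Proof.
  destruct C1 as [[b0 [hb0 hbb]] _], C2 as [_ hcs].
  assert (ha0 : forall n, 0 <= a n) by (intros n; apply Rlt_le, ha).
  assert (hc0 : forall n, 0 <= c n) by (intros n; apply Rlt_le, hc).
  split.
  - exists (rpow (b0 / 2) (1 / p)), (b0 / (2 * p)).
    split; [rewrite rpow_Rpower by lra; apply Rpower_gt0 |].
    split; [apply Rdiv_lt_0_compat; lra |].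
    intros u hu hnorm; apply (Ifun_ge_on_sphere p q r a b c); auto; lra.
  - exists delta0; split; [| split; [| split]].
    + replace delta0 with (fun n => 1 * delta0 n)
        by (apply functional_extensionality; intros n; ring).
      apply inD_scaled_delta0; lra.
    + exists 0%Z; unfold delta0; destruct Z.eq_dec; [lra | lia].
    + intros t ht; now apply inD_scaled_delta0.
    + eapply is_lim_ext_loc; [exists 0; intros t ht; symmetry;
                               apply Ifun_scaled_delta0; auto; lra |].
      apply power_log_to_m_infty; try lra.
      * apply Rdiv_le_0_compat; [pose proof (ha 0%Z); pose proof (hb 0%Z);
                                 pose proof (ha (-1)%Z) |]; lra.
      * apply Rdiv_lt_0_compat; [apply Rmult_lt_0_compat; [| apply hc] |]; lra.
Qed.
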